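(* Let $d\ge1$ and let $X_1,\dots,X_d$ be non-negative integrable random variables that are pairwise independent. Let $\tilde X_1,\dots,\tilde X_d$ be mutually independent with $\tilde X_i$ equal in distribution to $X_i$. Then $\mathbb{E}\max_{i\in[d]}X_i\ge\frac12\mathbb{E}\max_{i\in[d]}\tilde X_i$.
   Context: $[d]=\{1,\dots,d\}$. *)

From HB Require Import structures.
From mathcomp Require Import all_boot all_order all_algebra.
From mathcomp Require Import all_classical all_reals all_analysis.
Set Implicit Arguments. Unset Strict Implicit. Unset Printing Implicit Defensive.
Import Order.TTheory GRing.Theory Num.Theory.
Local Open Scope classical_set_scope.
Local Open Scope ring_scope.

Definition pairwise_indep {dT : measure_display} {T : measurableType dT}
  {R : realType} (P : probability T R) (n : nat) (X : 'I_n -> {RV P >-> R}) :=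
  forall (i j : 'I_n), i != j ->
  forall (A B : set R), measurable A -> measurable B ->
  P (X i @^-1` A `&` X j @^-1` B) = (P (X i @^-1` A) * P (X j @^-1` B))%E.

Definition mutual_indep {dT : measure_display} {T : measurableType dT}
  {R : realType} (P : probability T R) (n : nat) (X : 'I_n -> {RV P >-> R}) :=
  forall (S : {set 'I_n}) (A : 'I_n -> set R), (forall i, measurable (A i)) ->
  P (\bigcap_(i in [set i | i \in S]) X i @^-1` A i)
  = (\prod_(i in S) P (X i @^-1` A i))%E.

Definition maxRV {T : Type} {R : realType} (n : nat) (X : 'I_n -> T -> R) : T -> R :=
  fun w => \big[Num.max/0]_(i < n) X i w.

(* Fix [r >= 0] and let [m = min(S, 1)], where [S] is the sum of the tail
   probabilities [P(X_i > r)].  For pairwise independent events Bonferroni's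
   inequality gives [P(max_i X_i > r) >= m - m^2/2 >= m/2], while the union bound
   gives [P(max_i Xt_i > r) <= m], since the Xt_i have the same marginals.
   Integrating the tail probabilities over [r >= 0] yields the claim. *)

From HB Require Import structures.
From mathcomp Require Import all_boot all_order all_algebra.
From mathcomp Require Import all_classical all_reals all_analysis.
From mathcomp Require Import lra measurable_realfun.
Import Order.TTheory GRing.Theory Num.Theory.
Local Open Scope classical_set_scope.
Local Open Scope ring_scope.

Section real_probability.
Context {d : measure_display} {T : measurableType d} {R : realType}
  (P : probability T R).

Definition pr (A : set T) : R := fine (P A).

Lemma prE A : measurable A -> P A = (pr A)%:E.
Proof. by move=> mA; rewrite /pr fineK// fin_num_measure. Qed.

Lemma pr_ge0 A : 0 <= pr A.
Proof. by rewrite /pr fine_ge0. Qed.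

Lemma pr_le1 A : measurable A -> pr A <= 1.
Proof. by move=> mA; rewrite -lee_fin -prE// probability_le1. Qed.

Lemma le_pr A B : measurable A -> measurable B -> A `<=` B -> pr A <= pr B.
Proof. by move=> mA mB AB; rewrite -lee_fin -!prE// le_measure// inE. Qed.

Lemma prU A B : measurable A -> measurable B ->
  pr (A `|` B) = pr A + pr B - pr (A `&` B).
Proof.
move=> mA mB; apply/EFin_inj.
rewrite EFinB EFinD -!prE//; [|exact: measurableI|exact: measurableU].
by rewrite measureUfinl// -ge0_fin_numE// fin_num_measure.
Qed.

Lemma pr_setI_bigsetU_le {I : Type} (B : set T) (A : I -> set T) (s : seq I) :
  measurable B -> (forall i, measurable (A i)) ->
  pr (B `&` \big[setU/set0]_(i <- s) A i) <= \sum_(i <- s) pr (B `&` A i).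
Proof.
move=> mB mA; elim: s => [|i s IH]; first by rewrite !big_nil setI0 /pr measure0.
rewrite !big_cons setIUr prU; last 2 first.
- exact: measurableI.
- by apply: measurableI => //; exact: bigsetU_measurable.
by have := pr_ge0 ((B `&` A i) `&` (B `&` \big[setU/set0]_(j <- s) A j)); lra.
Qed.

Lemma pr_bigsetU_le {I : Type} (A : I -> set T) (s : seq I) :
  (forall i, measurable (A i)) ->
  pr (\big[setU/set0]_(i <- s) A i) <= \sum_(i <- s) pr (A i).
Proof.
move=> mA; rewrite -[X in pr X]setTI (eq_bigr (fun i => pr (setT `&` A i))).
  exact: pr_setI_bigsetU_le.
by move=> i _; rewrite setTI.
Qed.

(* Bonferroni's bound [S - S^2/2] is only monotone for [S <= 1], hence the
   truncation of the sum at 1, which is what makes the induction go through. *)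
Lemma pr_bigsetU_pairwise_indep_ge {I : eqType} (A : I -> set T) (s : seq I) :
  (forall i, measurable (A i)) ->
  (forall i j, i != j -> pr (A i `&` A j) = pr (A i) * pr (A j)) ->
  uniq s ->
  let m := Num.min (\sum_(i <- s) pr (A i)) 1 in
  m - m ^+ 2 / 2 <= pr (\big[setU/set0]_(i <- s) A i).
Proof.
move=> mA indepA; elim: s => [|i s IH] /=.
  by rewrite !big_nil /pr measure0 /= min_l//; lra.
move=> /andP[iNs /IH /= {}IH]; rewrite !big_cons.
set S := \sum_(j <- s) pr (A j) in IH *.
set U := \big[setU/set0]_(j <- s) A j in IH *.
have mU : measurable U by exact: bigsetU_measurable.
have p0 := pr_ge0 (A i).
have S0 : 0 <= S by rewrite sumr_ge0// => j _; exact: pr_ge0.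
have UAU : pr U <= pr (A i `|` U) by apply: le_pr => //; exact: measurableU.
have AiU : pr (A i `&` U) <= pr (A i) * S.
  apply: (le_trans (pr_setI_bigsetU_le _ _ s (mA i) mA)).
  rewrite big_distrr /= !big_seq; apply: ler_sum => j js.
  by rewrite indepA//; apply: contraNneq iNs => ->.
have := prU _ _ (mA i) mU.
have [S1|S1] := leP 1 S.
  by rewrite (min_r S1) expr1n in IH; rewrite min_r ?expr1n; lra.
rewrite (min_l (ltW S1)) in IH.
by have [pS1|pS1] := leP (pr (A i) + S) 1; rewrite ?expr1n; nra.
Qed.

End real_probability.

Lemma pairwise_indep_bigsetU_ge_half
    {dP dQ : measure_display} {TP : measurableType dP} {TQ : measurableType dQ}
    {R : realType} (P : probability TP R) (Q : probability TQ R)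
    {I : eqType} (A : I -> set TP) (B : I -> set TQ) (s : seq I) :
  (forall i, measurable (A i)) -> (forall i, measurable (B i)) ->
  (forall i j, i != j -> P (A i `&` A j) = (P (A i) * P (A j))%E) ->
  (forall i, Q (B i) = P (A i)) ->
  uniq s ->
  (2^-1%:E * Q (\big[setU/set0]_(i <- s) B i) <=
   P (\big[setU/set0]_(i <- s) A i))%E.
Proof.
move=> mA mB indepA QBPA us.
have prAB i : pr Q (B i) = pr P (A i) by rewrite /pr QBPA.
have indep_pr i j : i != j -> pr P (A i `&` A j) = pr P (A i) * pr P (A j).
  move=> ij; apply/EFin_inj; rewrite EFinM -!prE//; first exact: indepA.
  exact: measurableI.
have := pr_bigsetU_pairwise_indep_ge P A s mA indep_pr us.
have := pr_bigsetU_le Q B s mB; rewrite (eq_bigr _ (fun i _ => prAB i)).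
have mUA : measurable (\big[setU/set0]_(i <- s) A i) by exact: bigsetU_measurable.
have mUB : measurable (\big[setU/set0]_(i <- s) B i) by exact: bigsetU_measurable.
have := pr_le1 Q _ mUB.
rewrite (prE P _ mUA) (prE Q _ mUB) -EFinM lee_fin /=.
set S := \sum_(i <- s) _; set q := pr Q _ => q1 qS.
have S0 : 0 <= S by rewrite sumr_ge0// => i _; exact: pr_ge0.
have : q <= Num.min S 1 by rewrite le_min qS q1.
have : Num.min S 1 <= 1 by rewrite ge_min lexx orbT.
have : 0 <= Num.min S 1 by rewrite le_min S0 ler01.
move: (Num.min S 1) => m; nra.
Qed.

Section max_of_random_variables.
Context {d : measure_display} {T : measurableType d} {R : realType}.

Lemma maxRV_ge0 (n : nat) (X : 'I_n -> T -> R) w : 0 <= maxRV X w.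
Proof.
by apply: (big_rec (fun x => 0 <= x)) => // i x _ x0; rewrite le_max x0 orbT.
Qed.

Lemma preimage_bigmax_gt {I : Type} (s : seq I) (X : I -> T -> R) (r : R) :
  0 <= r ->
  (fun w => \big[Num.max/0]_(i <- s) X i w) @^-1` `]r, +oo[
  = \big[setU/set0]_(i <- s) (X i @^-1` `]r, +oo[).
Proof.
move=> r0; elim: s => [|i s IH].
  rewrite big_nil; apply/seteqP; split => w //=.
  by rewrite big_nil in_itv/= ltNge r0.
rewrite big_cons -IH; apply/seteqP; split => w /=;
  rewrite big_cons !in_itv /= !andbT lt_max.
- by move=> /orP.
- by case=> ->; rewrite ?orbT.
Qed.

Lemma measurable_bigmax {I : Type} (s : seq I) (X : I -> T -> R) :
  (forall i, measurable_fun setT (X i)) ->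
  measurable_fun setT (fun w => \big[Num.max/0]_(i <- s) X i w).
Proof.
move=> mX; elim: s => [|i s IH].
  under eq_fun do rewrite big_nil; exact: measurable_cst.
under eq_fun do rewrite big_cons; exact: measurable_maxr.
Qed.

Context {P : probability T R}.

Definition max_rv {n : nat} (X : 'I_n -> {RV P >-> R}) : {RV P >-> R} :=
  mfun_Sub (mem_set (measurable_bigmax _ _ (fun i => measurable_funPT (X i)))
    : maxRV (fun i => X i) \in mfun).

Lemma ccdf_max_rv (n : nat) (X : 'I_n -> {RV P >-> R}) (r : R) : 0 <= r ->
  ccdf (max_rv X) r = P (\big[setU/set0]_(i < n) X i @^-1` `]r, +oo[).
Proof.
by move=> r0; rewrite /ccdf /distribution /pushforward -preimage_bigmax_gt.
Qed.

End max_of_random_variables.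

Lemma ge0_le_expectation_ccdf
    {dP dQ : measure_display} {TP : measurableType dP} {TQ : measurableType dQ}
    {R : realType} {P : probability TP R} {Q : probability TQ R}
    (Y : {RV P >-> R}) (Z : {RV Q >-> R}) (c : R) :
  0 <= c -> (forall w, 0 <= Y w) -> (forall w, 0 <= Z w) ->
  (forall r, 0 <= r -> (c%:E * ccdf Z r <= ccdf Y r)%E) ->
  (c%:E * 'E_Q[Z] <= 'E_P[Y])%E.
Proof.
move=> c0 Y0 Z0 cZY.
have mY : measurable_fun (`[0%R, +oo[ : set R) (ccdf Y).
  by apply: (measurable_funS measurableT) => //; exact: ccdf_measurable.
have mZ : measurable_fun (`[0%R, +oo[ : set R) (ccdf Z).
  by apply: (measurable_funS measurableT) => //; exact: ccdf_measurable.
rewrite !ge0_expectation_ccdf// -ge0_integralZl//.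
apply: ge0_le_integral => //.
- by move=> r _; rewrite mule_ge0// ?lee_fin//; exact: measure_ge0.
- exact: measurable_funeM.
by move=> r; rewrite /= in_itv /= andbT; exact: cZY.
Qed.

Theorem proposition12 (R : realType) (d : nat) (hd : (0 < d)%N)
  (d1 : measure_display) (T1 : measurableType d1) (P : probability T1 R)
  (X : 'I_d -> {RV P >-> R})
  (d2 : measure_display) (T2 : measurableType d2) (Q : probability T2 R)
  (Xt : 'I_d -> {RV Q >-> R}) :
  (forall i w, 0 <= X i w) ->
  (forall i, P.-integrable setT (EFin \o X i)) ->
  pairwise_indep X ->
  mutual_indep Xt ->
  (forall i (A : set R), measurable A ->
     distribution P (X i) A = distribution Q (Xt i) A) ->
  ('E_P[maxRV (fun i => X i)] >= 2^-1%:E * 'E_Q[maxRV (fun i => Xt i)])%E.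
Proof.
(* Since [maxRV] includes the value 0, neither the sign nor the integrability of
   the [X i] is needed, and [d = 0] is harmless. *)
move=> _ _ indepX _ same_law.
apply: (ge0_le_expectation_ccdf (max_rv X) (max_rv Xt)) => [|w|w|r r0].
- by rewrite invr_ge0.
- exact: maxRV_ge0.
- exact: maxRV_ge0.
rewrite !ccdf_max_rv//.
apply: pairwise_indep_bigsetU_ge_half (index_enum_uniq _).
- by move=> i; exact: measurable_funPTI.
- by move=> i; exact: measurable_funPTI.
- by move=> i j ij; exact: indepX.
- by move=> i; rewrite -[LHS]/(distribution Q (Xt i) _) -same_law.
Qed.
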